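(* Let $(W,\rho)$ be a rational $\mathfrak{sl}(2)$-module and let $C_\rho$ be its Casimir operator. Then the minimal polynomial $M_{C_\rho}(t)$ of $C_\rho$, regarded as a $\mathbb{C}(z)$-linear endomorphism of the finite-dimensional $\mathbb{C}(z)$-vector space $W$, has all its coefficients in $\mathbb{C}$, i.e. $M_{C_\rho}(t)\in\mathbb{C}[t]$. Consequently, $C_\rho$ regarded as a $\mathbb{C}$-linear endomorphism of $W$ has minimal polynomial $M_{C_\rho}(t)$.
   Context: $\mathfrak{sl}(2)$ is the complex Lie algebra with Chevalley basis $e,f,h$, $[e,f]=h$, $[h,e]=2e$, $[h,f]=-2f$; put $L_{-1}=f$, $L_0=-\tfrac12 h$, $L_1=-e$. Every $\mathfrak{sl}(2)$-module $(V,\rho)$ is a $\mathbb{C}[z]$-module via $z\cdot v=\rho(L_0)(v)$. The Casimir operator of $(V,\rho)$ is $C_\rho=\rho(L_0)(\rho(L_0)-1)-\rho(L_{-1})\rho(L_1)$. An $\mathfrak{sl}(2)$-module is called rational if, with this $\mathbb{C}[z]$-module structure, it is a finite-dimensional $\mathbb{C}(z)$-vector space (i.e. the $\mathbb{C}[z]$-action extends to a $\mathbb{C}(z)$-vector space structure of finite dimension). For a rational module, $C_\rho$ is $\mathbb{C}(z)$-linear. *)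

(* The complex numbers are modelled as R[i] = complex R
   for R : realType (mathcomp-real-closed's complex numbers over the reals). *)
From mathcomp Require Import all_boot all_algebra.
From mathcomp Require Import reals.
From mathcomp.real_closed Require Export complex.
Set Implicit Arguments.
Unset Strict Implicit.
Unset Printing Implicit Defensive.
Import GRing.Theory.
Local Open Scope ring_scope.

Definition Cz (R : realType) : fieldType := {fraction {poly R[i]}}.

Definition cst (R : realType) (c : R[i]) : Cz R := @FracField.tofrac {poly R[i]} (c%:P).

Definition zvar (R : realType) : Cz R := @FracField.tofrac {poly R[i]} 'X.

(* A rational sl(2)-module is modelled as a finite-dimensional C(z)-vector
   space W (vectType (Cz R)), the C-structure being the restriction of
   scalars along cst, together with C-linear maps rho(e), rho(f), rho(h). *)
Definition Clinear (R : realType) (W : vectType (Cz R)) (g : W -> W) :=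
  (forall u v, g (u + v) = g u + g v) /\
  (forall (c : R[i]) v, g (cst c *: v) = cst c *: g v).

Definition is_sl2_module (R : realType) (W : vectType (Cz R))
    (e f h : W -> W) :=
  [/\ Clinear e, Clinear f, Clinear h &
   forall v,
     [/\ e (f v) - f (e v) = h v,
         h (e v) - e (h v) = e v *+ 2 &
         h (f v) - f (h v) = - (f v *+ 2)]].

Definition rhoLm1 (R : realType) (W : vectType (Cz R)) (f : W -> W) : W -> W :=
  f.
Definition rhoL0 (R : realType) (W : vectType (Cz R)) (h : W -> W) : W -> W :=
  fun v => cst (- (2%:R)^-1) *: h v.
Definition rhoL1 (R : realType) (W : vectType (Cz R)) (e : W -> W) : W -> W :=
  fun v => - e v.

(* Rationality: the C(z)-scalar action extends the C[z]-action z.v = rho(L0) v. *)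
Definition z_acts_as_L0 (R : realType) (W : vectType (Cz R)) (h : W -> W) :=
  forall v : W, zvar R *: v = rhoL0 h v.

Definition casimir (R : realType) (W : vectType (Cz R)) (e f h : W -> W) :
    W -> W :=
  fun v => rhoL0 h (rhoL0 h v - v) - rhoLm1 f (rhoL1 e v).

Definition pevalK (R : realType) (W : vectType (Cz R)) (p : {poly Cz R})
    (g : W -> W) (v : W) : W :=
  \sum_(i < size p) p`_i *: iter i g v.

Definition pevalC (R : realType) (W : vectType (Cz R)) (p : {poly R[i]})
    (g : W -> W) (v : W) : W :=
  \sum_(i < size p) cst p`_i *: iter i g v.

Definition is_minpolyK (R : realType) (W : vectType (Cz R)) (p : {poly Cz R})
    (g : W -> W) :=
  [/\ p \is monic,
      forall v, pevalK p g v = 0 &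
      forall q : {poly Cz R}, (forall v, pevalK q g v = 0) -> p %| q].

Definition is_minpolyC (R : realType) (W : vectType (Cz R)) (p : {poly R[i]})
    (g : W -> W) :=
  [/\ p \is monic,
      forall v, pevalC p g v = 0 &
      forall q : {poly R[i]}, (forall v, pevalC q g v = 0) -> p %| q].

(* In a rational module z acts as L0 = -h/2, so h is the scalar -2z, and the
   relations [h,e] = 2e, [h,f] = -2f say that e and f are semilinear for the
   shifts x(z) |-> x(z+1) and x(z) |-> x(z-1) of C(z).  Hence the Casimir
   operator C is C(z)-linear and commutes with f.  Moreover f has trivial
   kernel: if f v = 0, then f (e^(n+1) v) = (n+1)(2z+n) e^n v, so for v <> 0
   the vectors v, ev, e^2v, ... would be linearly independent.  Applying f to
   M(C) = 0, where M is the minimal polynomial of C over C(z), shows that the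
   polynomial obtained from M by the substitution z |-> z+1 in its coefficients
   also kills C; it is monic of the same degree, so it equals M.  A rational
   function invariant under z |-> z+1 is constant, so M has coefficients in C,
   and it is then also the minimal polynomial of C over C. *)

From HB Require Import structures.
From mathcomp Require Import all_boot all_algebra.
From mathcomp Require Import boolp reals.
From mathcomp.real_closed Require Import complex.
From mathcomp Require Import ring.
Import GRing.Theory Num.Theory.
Local Open Scope ring_scope.

Local Notation "x %:F" := (@FracField.tofrac _ x).

Section PolyShift.
Context {F : numFieldType}.

Lemma poly_nat_nonroot_tail (p : {poly F}) :
  p != 0 -> exists k0, forall k, (k0 <= k)%N -> ~~ root p k%:R.
Proof.
elim: {p}(size p) {-2}p (leqnn (size p)) => [|s IHs] p.
  by rewrite leqn0 size_poly_eq0 => /eqP ->; rewrite eqxx.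
move=> size_p p_neq0.
have [[k /factor_theorem [q def_p]] | no_root] :=
  pselect (exists k : nat, root p k%:R); last first.
  by exists 0%N => k _; apply/negP => pk; apply: no_root; exists k.
have q_neq0 : q != 0 by apply: contraNneq p_neq0 => q0; rewrite def_p q0 mul0r.
have size_q : (size q <= s)%N.
  by move: size_p; rewrite def_p size_mul ?polyXsubC_eq0 // size_XsubC addn2.
have [k1 q_tail] := IHs q size_q q_neq0.
exists (maxn k1 k.+1) => j; rewrite geq_max => /andP [k1j kj].
rewrite def_p rootM negb_or q_tail // root_XsubC eqr_nat.
by apply: contraTN kj => /eqP ->; rewrite ltnn.
Qed.

Lemma shift_invariant_ratio (n d : {poly F}) : d != 0 ->
  (n \Po ('X + 1)) * d = n * (d \Po ('X + 1)) -> exists c, n = c%:P * d.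
Proof.
move=> d_neq0 nd_inv.
have [k0 d_tail] := poly_nat_nonroot_tail _ d_neq0.
pose c := n.[k0%:R] / d.[k0%:R]; exists c.
pose P := n - c%:P * d.
have P_inv : (P \Po ('X + 1)) * d = P * (d \Po ('X + 1)).
  by rewrite /P comp_polyB comp_polyM comp_polyC mulrBl nd_inv; ring.
have P_tail j : root P (k0 + j)%:R.
  elim: j => [|j IHj].
    by rewrite addn0 /root /P !hornerE /c divfK ?subrr ?d_tail.
  have /eqP := congr1 (horner^~ (k0 + j)%:R) P_inv.
  have XS1 : ('X + 1 : {poly F}).[(k0 + j)%:R] = (k0 + j.+1)%:R.
    by rewrite hornerD hornerX hornerC natr1 addnS.
  rewrite !hornerM !horner_comp XS1 (rootP IHj) mul0r.
  have := d_tail _ (leq_addr j k0); rewrite rootE => dj.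
  by rewrite mulf_eq0 (negPf dj) orbF.
apply/eqP; rewrite -subr_eq0 -/P; apply: contraT => P_neq0.
have [k1 P_nonroot] := poly_nat_nonroot_tail _ P_neq0.
by have := P_nonroot (k0 + k1)%N (leq_addl _ _); rewrite P_tail.
Qed.

End PolyShift.

Lemma tofrac_numden {T : idomainType} (x : {fraction T}) :
  x = (\n_(repr x))%:F / (\d_(repr x))%:F.
Proof.
rewrite -{1}(reprK x); move: (repr x) => r.
have d_neq0 : (\d_r)%:F != 0 :> {fraction T} by rewrite tofrac_eq0 denom_ratioP.
apply: (mulIf d_neq0); rewrite divfK //; unlock FracField.tofrac; rewrite !piE.
apply/eqmodP; rewrite /= FracField.equivfE /FracField.mulf /=.
by rewrite !numden_Ratio ?mulf_neq0 ?oner_neq0 ?denom_ratioP // !mulr1 mulrC.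
Qed.

Lemma tofrac_div_eq {T : idomainType} (p q p' q' : T) : q != 0 -> q' != 0 ->
  (p%:F / q%:F == p'%:F / q'%:F :> {fraction T}) = (p * q' == p' * q).
Proof.
move=> q_neq0 q'_neq0.
by rewrite eqr_div ?tofrac_eq0 // -!tofracM tofrac_eq.
Qed.

Section FractionShift.
Context {F : idomainType}.
Implicit Types (d : F) (p q : {poly F}) (x : {fraction {poly F}}).

Local Notation shiftX d := ('X + d%:P).

(* x(z + d), computed on the representative [repr x]; by [zshift_frac] the
   choice of representative does not matter. *)
Definition zshift d x : {fraction {poly F}} :=
  (\n_(repr x) \Po shiftX d)%:F / (\d_(repr x) \Po shiftX d)%:F.

Lemma comp_shiftX_eq0 d p : (p \Po shiftX d == 0) = (p == 0).
Proof. by rewrite comp_poly2_eq0 ?size_XaddC. Qed.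

Lemma zshift_frac d p q : q != 0 ->
  zshift d (p%:F / q%:F) = (p \Po shiftX d)%:F / (q \Po shiftX d)%:F.
Proof.
move=> q_neq0; apply/eqP; rewrite /zshift.
have d_neq0 := denom_ratioP (repr (p%:F / q%:F)).
rewrite tofrac_div_eq ?comp_shiftX_eq0 // -!comp_polyM.
have /eqP := tofrac_numden (p%:F / q%:F).
by rewrite eq_sym tofrac_div_eq // => /eqP ->.
Qed.

Lemma zshift_tofrac d p : zshift d p%:F = (p \Po shiftX d)%:F.
Proof.
rewrite -[p%:F]divr1 -tofrac1 zshift_frac ?oner_neq0 //.
by rewrite rmorph1 tofrac1 divr1.
Qed.

Lemma zshift0 d : zshift d 0 = 0.
Proof. by rewrite -tofrac0 zshift_tofrac comp_poly0. Qed.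

Lemma zshift1 d : zshift d 1 = 1.
Proof. by rewrite -tofrac1 zshift_tofrac rmorph1. Qed.

Lemma zshiftK d : cancel (zshift d) (zshift (- d)).
Proof.
move=> x; rewrite {2}(tofrac_numden x) [zshift d x]/zshift.
rewrite zshift_frac ?comp_shiftX_eq0 ?denom_ratioP //.
by rewrite polyCN !comp_polyXaddC_K.
Qed.

Section Semilinear.
Context {W : vectType {fraction {poly F}}} {d : F} {g : W -> W}.
Hypothesis g_add : {morph g : u v / u + v}.
Hypothesis g_cst : forall c v, g (c%:P%:F *: v) = c%:P%:F *: g v.
Hypothesis g_var : forall v, g ('X%:F *: v) = ('X%:F + d%:P%:F) *: g v.

Lemma semilinear_tofrac p v : g (p%:F *: v) = (p \Po shiftX d)%:F *: g v.
Proof.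
elim/poly_ind: p v => [|p c IHp] v.
  by rewrite comp_poly0 -polyC0 g_cst.
rewrite tofracD tofracM scalerDl g_add g_cst -scalerA IHp g_var scalerA.
rewrite comp_polyD comp_polyM comp_polyX comp_polyC !tofracD tofracM scalerDl.
by rewrite [(shiftX d)%:F]tofracD.
Qed.

Lemma semilinear_zshift x v : g (x *: v) = zshift d x *: g v.
Proof.
rewrite {1}(tofrac_numden x) /zshift.
set p := \n_(repr x); set q := \d_(repr x).
have tq_neq0 : q%:F != 0 by rewrite tofrac_eq0 denom_ratioP.
have v_def : v = q%:F *: (q%:F^-1 *: v) by rewrite scalerA mulfV ?scale1r.
have tsq_neq0 : (q \Po shiftX d)%:F != 0.
  by rewrite tofrac_eq0 comp_shiftX_eq0 denom_ratioP.
rewrite -scalerA semilinear_tofrac [in RHS]v_def semilinear_tofrac scalerA.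
by rewrite (mulfVK tsq_neq0).
Qed.

End Semilinear.
End FractionShift.

Lemma zshift_fixed {F : numFieldType} (x : {fraction {poly F}}) :
  zshift 1 x = x -> exists c : F, x = c%:P%:F.
Proof.
move=> /eqP; rewrite {2}(tofrac_numden x) /zshift polyC1.
rewrite tofrac_div_eq ?comp_shiftX_eq0 ?denom_ratioP // => /eqP nd_inv.
have [c num_def] := shift_invariant_ratio _ _ (denom_ratioP _) nd_inv.
exists c; rewrite (tofrac_numden x) num_def tofracM mulfK //.
by rewrite tofrac_eq0 denom_ratioP.
Qed.

Lemma morph_add_nmod_morphism {U V : zmodType} {a : U -> V} :
  {morph a : u v / u + v} -> nmod_morphism a.
Proof.
by move=> a_add; split=> //; apply: (addrI (a 0)); rewrite -a_add !addr0.
Qed.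

Section LoweringString.
Context {K : fieldType} {W : vectType K} {s : K -> K} {a : W -> W}.
Hypothesis a_add : {morph a : u v / u + v}.
Hypothesis a_semilinear : forall x w, a (x *: w) = s x *: a w.

Lemma semilinear_span_sub (X : seq W) (U : {vspace W}) :
  {in X, forall x, a x \in U} -> forall u, u \in <<X>>%VS -> a u \in U.
Proof.
elim: X => [|x X IHX] aXU u.
  rewrite span_nil memv0 => /eqP ->.
  by rewrite (morph_add_nmod_morphism a_add).1 mem0v.
rewrite span_cons => /memv_addP [_ /vlineP [k ->] [u' u'X ->]].
rewrite a_add a_semilinear memvD ?memvZ ?(aXU x) ?mem_head //.
by apply: IHX u' u'X => y Xy; rewrite aXU // in_cons Xy orbT.
Qed.

Context {b : W -> W} {c : nat -> K} {v : W}.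
Hypothesis av0 : a v = 0.
Hypothesis a_string : forall n, a (iter n.+1 b v) = c n *: iter n b v.
Hypothesis c_neq0 : forall n, c n != 0.

Lemma string_notin_span n : v != 0 -> iter n b v \notin <<traject b v n>>%VS.
Proof.
move=> v_neq0; elim: n => [|n IHn]; first by rewrite span_nil memv0.
have a_span u :
    u \in <<traject b v n.+1>>%VS -> a u \in <<traject b v n>>%VS.
  apply: semilinear_span_sub => _ /trajectP [[|k] kn ->].
    by rewrite av0 mem0v.
  by rewrite a_string memvZ // memv_span //; apply/trajectP; exists k.
apply: contra IHn => /a_span; rewrite a_string => /(memvZ (c n)^-1).
by rewrite scalerA mulVf ?scale1r.
Qed.

Lemma string_free n : v != 0 -> free (traject b v n).
Proof.
move=> v_neq0; elim: n => [|n IHn]; first by rewrite /free span_nil dimv0.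
have rot_last : perm_eq (rcons (traject b v n) (iter n b v))
                        (iter n b v :: traject b v n) by rewrite perm_rcons.
by rewrite trajectSr (perm_free rot_last) free_cons string_notin_span.
Qed.

Lemma lowest_string_eq0 : v = 0.
Proof.
apply/eqP; apply: contraT => v_neq0.
have /eqP := string_free (\dim {:W}).+1 v_neq0; rewrite size_traject => dimX.
by have := dimvS (subvf <<traject b v (\dim {:W}).+1>>); rewrite dimX ltnn.
Qed.

End LoweringString.

Lemma map_poly_of_coef_image (A B : nzRingType) (f : {rmorphism A -> B})
    (p : {poly B}) :
  (forall i, exists c, p`_i = f c) -> exists q, p = map_poly f q.
Proof.
elim/poly_ind: p => [|p b IHp] coef_img; first by exists 0; rewrite rmorph0.
have [q ->] : exists q, p = map_poly f q.
  apply: IHp => i; have [c c_def] := coef_img i.+1.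
  by exists c; rewrite -c_def coefD coefMX coefC addr0.
have [c] := coef_img 0%N; rewrite coefD coefMX coefC add0r => ->.
by exists (q * 'X + c%:P); rewrite rmorphD rmorphM /= map_polyX map_polyC.
Qed.

HB.instance Definition _ (R : realType) :=
  GRing.RMorphism.copy (@cst R) (@FracField.tofrac {poly R[i]} \o polyC).

Section MinimalPolynomial.
Import VectorInternalTheory.
Context {R : realType} {W : vectType (Cz R)}.
Implicit Types (g : W -> W) (L : {linear W -> W}).

Lemma minpolyK_of_rV_iso L {n} (phi : {linear W -> 'rV[Cz R]_n})
    (psi : {linear 'rV[Cz R]_n -> W}) :
  cancel phi psi -> cancel psi phi -> exists M, is_minpolyK M L.
Proof.
case: n phi psi => [|n] phi psi phiK psiK.
  have W0 (w : W) : w = 0 by rewrite -(phiK w) (thinmx0 (phi w)) linear0.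
  by exists 1; split=> [|w|q _]; rewrite ?monic1 ?dvd1p ?W0.
pose A := lin1_mx (phi \o L \o psi).
have phiL w : phi (L w) = phi w *m A by rewrite mul_rV_lin1 /= phiK.
have phi_iter k w : phi (iter k L w) = phi w *m A ^+ k.
  elim: k => [|k IHk]; first by rewrite mulmx1.
  by rewrite iterS phiL IHk exprSr mulmxA.
have phi_pevalK p w : phi (pevalK p L w) = phi w *m horner_mx A p.
  rewrite /pevalK linear_sum -[in RHS](coefK p) poly_def rmorph_sum mulmx_sumr.
  apply: eq_bigr => i _; rewrite linearZ phi_iter /=.
  by rewrite horner_mxZ rmorphXn /= horner_mx_X scalemxAr.
exists (mxminpoly A); split=> [|w|q q_ann]; first exact: mxminpoly_monic.
  by rewrite -[pevalK _ _ _](phiK _) phi_pevalK mx_root_minpoly mulmx0 linear0.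
apply: mxminpoly_min; apply/row_matrixP => i.
by rewrite rowE row0 -(psiK (delta_mx 0 i)) -phi_pevalK q_ann linear0.
Qed.

Lemma linear_minpolyK L : exists M, is_minpolyK M L.
Proof.
exact (minpolyK_of_rV_iso L v2r r2v (@v2rK _ W) (@r2vK _ W)).
Qed.

Lemma minpolyC_of_minpolyK (m : {poly R[i]}) g :
  is_minpolyK (map_poly (@cst R) m) g -> is_minpolyC m g.
Proof.
have pevalC_map q w : pevalC q g w = pevalK (map_poly (@cst R) q) g w.
  by rewrite /pevalK size_map_poly; apply: eq_bigr => i _; rewrite coef_map.
case=> m_monic m_ann m_min; split=> [|w|q q_ann].
- by rewrite -(map_monic (@cst R)).
- by rewrite pevalC_map.
- by rewrite -(dvdp_map (@cst R)); apply: m_min => w; rewrite -pevalC_map.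
Qed.

End MinimalPolynomial.

Section Sl2Casimir.
Context {R : realType} {W : vectType (Cz R)} {e f h : W -> W}.
Hypothesis sl2 : is_sl2_module e f h.
Hypothesis z_L0 : z_acts_as_L0 h.
Local Notation z := (zvar R).
Local Notation Cas := (casimir e f h).

Let e_add : {morph e : u v / u + v}. Proof. by case: sl2 => [[]]. Qed.
Let f_add : {morph f : u v / u + v}. Proof. by case: sl2 => _ []. Qed.
Let e_cst c v : e (cst c *: v) = cst c *: e v. Proof. by case: sl2 => [[]]. Qed.
Let f_cst c v : f (cst c *: v) = cst c *: f v. Proof. by case: sl2 => _ []. Qed.
Let bracket_ef v : e (f v) - f (e v) = h v.
Proof. by case: sl2 => _ _ _ /(_ v) []. Qed.
Let bracket_he v : h (e v) - e (h v) = e v *+ 2.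
Proof. by case: sl2 => _ _ _ /(_ v) []. Qed.
Let bracket_hf v : h (f v) - f (h v) = - (f v *+ 2).
Proof. by case: sl2 => _ _ _ /(_ v) []. Qed.

HB.instance Definition _ :=
  GRing.isNmodMorphism.Build W W e (morph_add_nmod_morphism e_add).
HB.instance Definition _ :=
  GRing.isNmodMorphism.Build W W f (morph_add_nmod_morphism f_add).

Let two_neq0 : 2%:R != 0 :> Cz R.
Proof. by rewrite -(rmorph_nat (@cst R)) fmorph_eq0 pnatr_eq0. Qed.

Let cstN2 : cst (- 2%:R) = - 2%:R :> Cz R.
Proof. by rewrite rmorphN rmorph_nat. Qed.

Lemma h_scalar v : h v = (- 2%:R * z) *: v.
Proof.
rewrite -scalerA z_L0 /rhoL0 scalerA rmorphN fmorphV rmorph_nat mulrNN.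
by rewrite mulfV ?scale1r.
Qed.

Lemma zvar_shift_of_bracket g (k : R[i]) :
    (forall c v, g (cst c *: v) = cst c *: g v) ->
    (forall v, h (g v) - g (h v) = cst (k *+ 2) *: g v) ->
  forall v, g (z *: v) = (z + cst k) *: g v.
Proof.
move=> g_cst g_bracket v.
have := g_bracket v; rewrite !h_scalar -[(_ * z) *: v]scalerA -cstN2 g_cst.
move=> bracket; have gz : cst (- 2%:R) *: g (z *: v) =
    (cst (- 2%:R) * z - cst (k *+ 2)) *: g v.
  by rewrite scalerBl -bracket subKr.
apply: (scalerI (_ : cst (- 2%:R) != 0)); first by rewrite cstN2 oppr_eq0.
by rewrite gz scalerA; congr (_ *: _); rewrite cstN2 rmorphMn; field.
Qed.

Lemma e_zvar v : e (z *: v) = (z + cst 1) *: e v.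
Proof.
apply: zvar_shift_of_bracket => // w.
by rewrite bracket_he rmorphMn rmorph1 scaler_nat.
Qed.

Lemma f_zvar v : f (z *: v) = (z + cst (- 1)) *: f v.
Proof.
apply: zvar_shift_of_bracket => // w.
by rewrite bracket_hf rmorphMn rmorphN1 mulNrn scaleNr scaler_nat.
Qed.

Lemma e_semilinear x v : e (x *: v) = zshift 1 x *: e v.
Proof. exact (semilinear_zshift e_add e_cst e_zvar x v). Qed.

Lemma f_semilinear x v : f (x *: v) = zshift (- 1) x *: f v.
Proof. exact (semilinear_zshift f_add f_cst f_zvar x v). Qed.

Lemma casimirE v : Cas v = z *: (z *: v - v) + f (e v).
Proof. by rewrite /casimir -!z_L0 /rhoLm1 /rhoL1 raddfN opprK. Qed.

Lemma casimirD u v : Cas (u + v) = Cas u + Cas v.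
Proof.
rewrite !casimirE e_add f_add [z *: (u + v)]scalerDr opprD addrACA.
by rewrite scalerDr addrACA.
Qed.

Lemma casimirZ x v : Cas (x *: v) = x *: Cas v.
Proof.
have zxC w : z *: (x *: w) = x *: (z *: w) by rewrite !scalerA mulrC.
rewrite !casimirE e_semilinear f_semilinear zshiftK zxC -scalerBr zxC.
by rewrite [in RHS]scalerDr.
Qed.

Lemma casimir_is_linear : linear Cas.
Proof. by move=> x u v; rewrite casimirD casimirZ. Qed.

HB.instance Definition _ :=
  GRing.isLinear.Build (Cz R) W W *:%R Cas casimir_is_linear.

Lemma f_casimir v : f (Cas v) = Cas (f v).
Proof.
have efE : e (f v) = f (e v) + h v by rewrite -bracket_ef addrC subrK.
rewrite !casimirE efE !f_add f_zvar [f (z *: v - v)]raddfB /= f_zvar.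
rewrite h_scalar -scalerA -cstN2 f_cst f_zvar.
rewrite [RHS]addrCA [LHS]addrC; congr (_ + _).
rewrite !scalerBr !scalerA -!scalerBl -scalerDl; congr (_ *: _).
by rewrite rmorphN1 cstN2; ring.
Qed.

Definition string_coef n : {poly R[i]} := n.+1%:R * ('X *+ 2 + n%:R).

Lemma string_coef_neq0 n : string_coef n != 0.
Proof.
rewrite mulf_neq0 // -?polyC_natr ?polyC_eq0 ?pnatr_eq0 //.
apply/eqP => /(congr1 (coefp 1)) /eqP.
by rewrite /= coefD !coefMn coefX coefC coef0 /= addr0 pnatr_eq0.
Qed.

Lemma string_coef_shift n :
  string_coef n \Po ('X + 1) + 'X *+ 2 = string_coef n.+1.
Proof.
rewrite /string_coef comp_polyM comp_polyD !rmorphMn /= comp_polyX rmorph1.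
by ring.
Qed.

Lemma f_e_string v : f v = 0 ->
  forall n, f (iter n.+1 e v) = (string_coef n)%:F *: iter n e v.
Proof.
move=> fv0; have feE w : f (e w) = e (f w) - h w by rewrite -bracket_ef subKr.
elim=> [|n IHn].
  rewrite /= feE fv0 raddf0 sub0r h_scalar -scaleNr; congr (_ *: _).
  by rewrite /string_coef tofracM tofracD tofracMn !rmorph_nat; ring.
rewrite iterS feE IHn e_semilinear zshift_tofrac -iterS h_scalar -scalerBl.
congr (_ *: _); rewrite -string_coef_shift polyC1 tofracD tofracMn.
by ring.
Qed.

Lemma f_kernel_trivial v : f v = 0 -> v = 0.
Proof.
move=> fv0; have coef_neq0 n : (string_coef n)%:F != 0.
  by rewrite tofrac_eq0 string_coef_neq0.
exact (lowest_string_eq0 f_add f_semilinear fv0 (f_e_string v fv0) coef_neq0).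
Qed.

Lemma casimir_minpoly_shift_invariant {M} :
  is_minpolyK M Cas -> forall i, zshift 1 M`_i = M`_i.
Proof.
case=> M_monic M_ann M_min.
pose N := \poly_(i < size M) zshift 1 M`_i.
have lead_M : M`_(size M).-1 = 1 by move/monicP: M_monic.
have size_N : size N = size M.
  by apply: size_poly_eq; rewrite lead_M zshift1 oner_neq0.
have f_iter k w : f (iter k Cas w) = iter k Cas (f w).
  by elim: k => //= k IHk; rewrite f_casimir IHk.
have N_ann w : pevalK N Cas w = 0.
  apply: f_kernel_trivial; rewrite /pevalK (big_morph f f_add (raddf0 f)).
  rewrite size_N -[RHS](M_ann (f w)); apply: eq_bigr => i _.
  by rewrite coef_poly ltn_ord f_semilinear zshiftK f_iter.
have N_monic : N \is monic.
  have size_M_gt0 : (0 < size M)%N by rewrite size_poly_gt0 monic_neq0.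
  apply/monicP; rewrite /lead_coef size_N coef_poly ltn_predL size_M_gt0.
  by rewrite lead_M; exact: zshift1.
have NM : N = M.
  apply/eqP; rewrite -(eqp_monic N_monic M_monic) eqp_sym -dvdp_size_eqp.
    by rewrite size_N.
  exact: M_min.
move=> i; have [i_small | i_large] := ltnP i (size M).
  by rewrite -[in RHS]NM coef_poly i_small.
by rewrite (nth_default _ i_large); exact: (@zshift0 R[i] 1).
Qed.

Lemma casimir_minpoly_const :
  exists m, is_minpolyK (map_poly (@cst R) m) Cas.
Proof.
have [M M_min] : exists M, is_minpolyK M Cas := linear_minpolyK _.
have [m M_def] : exists m, M = map_poly (@cst R) m.
  apply: map_poly_of_coef_image => i.
  have := casimir_minpoly_shift_invariant M_min i.
  by case/(@zshift_fixed R[i]) => c c_def; exists c.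
by exists m; rewrite -M_def.
Qed.

End Sl2Casimir.

Theorem theorem6p1 (R : realType) (W : vectType (Cz R)) (e f h : W -> W) :
  is_sl2_module e f h -> z_acts_as_L0 h ->
  exists m : {poly R[i]},
    is_minpolyK (map_poly (@cst R) m) (casimir e f h) /\
    is_minpolyC m (casimir e f h).
Proof.
move=> sl2 z_L0; have [m m_min] := casimir_minpoly_const sl2 z_L0.
by exists m; split; last exact: minpolyC_of_minpolyK.
Qed.
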